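(* Let $\alpha>0$, $y_0\in\mathrm{dom}\, h$, $\{x_i\}_{i=0}^{k-1}\subseteq\mathrm{dom}\, h$ and $\zeta\in[0,1]^k$, and let $\Gamma_k$ be the ACP model induced by $(y_0,\{x_i\}_{i=0}^{k-1},\zeta)$. Then: (a) $\Gamma_k(x)\leq\phi^\alpha(x)$ for all $x\in\mathrm{dom}\, h$; (b) $\Gamma_k$ is $\alpha$-strongly convex. Furthermore, define $s_0=\nabla f(y_0)$ and $s_{j+1}=(1-\zeta_j)s_j+\zeta_j\nabla f(x_j)$ for $0\leq j\leq k-1$. Then (c) for all $u\in\mathrm{dom}\, h$, $\phi^\alpha(u)+\psi^\alpha(s_k)\leq \phi^\alpha(u)-\min_{x\in\mathbb{R}^n}\Gamma_k(x)$.
   Context: Let $\|\cdot\|$ be a norm on $\mathbb{R}^n$ with dual norm $\|\cdot\|_*$. Let $f:\mathbb{R}^n\to\mathbb{R}$ be convex, differentiable and $L$-smooth ($L>0$) with respect to $\|\cdot\|$, $h:\mathbb{R}^n\to(-\infty,\infty]$ closed proper convex with bounded domain, and $w:\mathbb{R}^n\to[0,+\infty]$ closed, $1$-strongly convex with respect to $\|\cdot\|$ on $\mathrm{dom}\, h$, with $\max_{\mathrm{dom}\, h}w<\infty$. For $\alpha>0$ let $h^\alpha=h+\alpha w$, $\phi^\alpha=f+h^\alpha$, $\psi^\alpha(z)=(h^\alpha)^*(-z)+f^*(z)$ ($^*$ = convex conjugate). Write $\ell_f(x;x_0)=f(x_0)+\langle\nabla f(x_0),x-x_0\rangle$. The ACP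 (aggregated cutting plane) model induced by $(y_0,\{x_i\}_{i=0}^{k-1},\zeta)$ is $\Gamma_k$ defined recursively by $\Gamma_0(x)=h^\alpha(x)+\ell_f(x;y_0)$ and $\Gamma_{j+1}(x)=(1-\zeta_j)\Gamma_j(x)+\zeta_j(h^\alpha(x)+\ell_f(x;x_j))$ for $0\le j\le k-1$. *)

From HB Require Import structures.
From mathcomp Require Import all_boot all_order all_algebra.
From mathcomp Require Import all_classical all_reals all_analysis.
Set Implicit Arguments. Unset Strict Implicit. Unset Printing Implicit Defensive.
Import Order.TTheory GRing.Theory Num.Theory.
Import numFieldNormedType.Exports.
Local Open Scope classical_set_scope.
Local Open Scope ring_scope.

Section Defs.
Variables (R : realType) (n : nat).
Notation V := 'rV[R]_n.

Definition dotp (x y : V) : R := \sum_(i < n) x 0 i * y 0 i.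

Definition is_norm (N : V -> R) : Prop :=
  [/\ forall x, N x = 0 -> x = 0,
      forall (a : R) x, N (a *: x) = `|a| * N x &
      forall x y, N (x + y) <= N x + N y].

Definition dual_norm (N : V -> R) (s : V) : R :=
  sup [set dotp s x | x in [set x | N x <= 1]].

Definition grad (f : V -> R) (x : V) : V :=
  \row_(i < n) ('d f x) (delta_mx 0 i).

Definition convex_fun (f : V -> R) : Prop :=
  forall x y (t : R), 0 <= t <= 1 ->
    f (t *: x + (1 - t) *: y) <= t * f x + (1 - t) * f y.

Definition smooth_wrt (N : V -> R) (L : R) (f : V -> R) : Prop :=
  forall x y, dual_norm N (grad f x - grad f y) <= L * N (x - y).

Definition dom (g : V -> \bar R) : set V := [set x | (g x < +oo)%E].

Definition proper_fun (g : V -> \bar R) : Prop :=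
  (forall x, g x != -oo%E) /\ dom g !=set0.

Definition closed_fun (g : V -> \bar R) : Prop :=
  closed [set p : V * R | (g p.1 <= p.2%:E)%E].

Definition strongly_convex_on (D : set V) (N : V -> R) (mu : R)
    (g : V -> \bar R) : Prop :=
  forall x y (t : R), D x -> D y -> 0 < t < 1 ->
    (g (t *: x + (1 - t) *: y)%R <=
       t%:E * g x + (1 - t)%:E * g y
       - (mu / 2 * t * (1 - t) * N (x - y) ^+ 2)%:E)%E.

Definition convex_efun (g : V -> \bar R) : Prop :=
  forall x y (t : R), 0 < t < 1 ->
    (g (t *: x + (1 - t) *: y)%R <= t%:E * g x + (1 - t)%:E * g y)%E.

Definition bounded_set_wrt (N : V -> R) (D : set V) : Prop :=
  exists M : R, forall x, D x -> N x <= M.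

Definition conj (g : V -> \bar R) (z : V) : \bar R :=
  ereal_sup [set ((dotp z x)%:E - g x)%E | x in [set: V]].

Definition h_alpha (h w : V -> \bar R) (alpha : R) (x : V) : \bar R :=
  (h x + alpha%:E * w x)%E.

Definition phi_alpha (f : V -> R) (h w : V -> \bar R) (alpha : R) (x : V)
  : \bar R := ((f x)%:E + h_alpha h w alpha x)%E.

Definition psi_alpha (f : V -> R) (h w : V -> \bar R) (alpha : R) (z : V)
  : \bar R :=
  (conj (h_alpha h w alpha) (- z) + conj (fun x => (f x)%:E) z)%E.

Definition lin (f : V -> R) (x x0 : V) : R :=
  f x0 + dotp (grad f x0) (x - x0).

Fixpoint ACP (f : V -> R) (h w : V -> \bar R) (alpha : R) (y0 : V)
    (xs : nat -> V) (zeta : nat -> R) (j : nat) : V -> \bar R :=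
  match j with
  | 0 => fun x => (h_alpha h w alpha x + (lin f x y0)%:E)%E
  | j'.+1 => fun x =>
      ((1 - zeta j')%:E * ACP f h w alpha y0 xs zeta j' x
       + (zeta j')%:E * (h_alpha h w alpha x + (lin f x (xs j'))%:E))%E
  end.

Fixpoint agg_grad (f : V -> R) (y0 : V) (xs : nat -> V) (zeta : nat -> R)
    (j : nat) : V :=
  match j with
  | 0 => grad f y0
  | j'.+1 => (1 - zeta j') *: agg_grad f y0 xs zeta j'
             + zeta j' *: grad f (xs j')
  end.

End Defs.

(* By induction on k, Gamma_k = h^alpha + l_k, where the aggregated
   linearization l_k is a convex combination of linearizations of f, hence an
   affine minorant x |-> <s_k, x> + l_k(0) of f (gradient inequality).  This
   gives (a); (b) holds because h^alpha = h + alpha w is alpha-strongly convex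
   and adding an affine function preserves strong convexity.  For (c), l_k <= f
   gives f^*(s_k) <= -l_k(0), and (h^alpha)^*(-s_k) <= l_k(0) - inf Gamma_k
   since Gamma_k(x) = h^alpha(x) + <s_k, x> + l_k(0); summing, the l_k(0) terms
   cancel and psi^alpha(s_k) <= - min Gamma_k. *)

From HB Require Import structures.
From mathcomp Require Import all_boot all_order all_algebra.
From mathcomp Require Import all_classical all_reals all_analysis.
From mathcomp Require Import lra ring.
Set Implicit Arguments. Unset Strict Implicit. Unset Printing Implicit Defensive.
Import Order.TTheory GRing.Theory Num.Theory.
Import numFieldNormedType.Exports.
Local Open Scope classical_set_scope.
Local Open Scope ring_scope.

Section Dotp.
Variables (R : realType) (n : nat).
Implicit Types (x y z : 'rV[R]_n) (a : R).

Lemma dotpDl x y z : dotp (x + y) z = dotp x z + dotp y z.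
Proof.
by rewrite /dotp -big_split; apply: eq_bigr => i _; rewrite mxE mulrDl.
Qed.

Lemma dotpZl a x z : dotp (a *: x) z = a * dotp x z.
Proof. by rewrite /dotp mulr_sumr; apply: eq_bigr => i _; rewrite mxE mulrA. Qed.

Lemma dotpC x y : dotp x y = dotp y x.
Proof. by apply: eq_bigr => i _; rewrite mulrC. Qed.

Lemma dotpDr x y z : dotp z (x + y) = dotp z x + dotp z y.
Proof. by rewrite !(dotpC z) dotpDl. Qed.

Lemma dotpZr a x z : dotp z (a *: x) = a * dotp z x.
Proof. by rewrite !(dotpC z) dotpZl. Qed.

Lemma dotpNl x z : dotp (- x) z = - dotp x z.
Proof. by rewrite -scaleN1r dotpZl mulN1r. Qed.

Lemma dotpNr x z : dotp z (- x) = - dotp z x.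
Proof. by rewrite !(dotpC z) dotpNl. Qed.

Lemma dotp_grad (f : 'rV[R]_n -> R) x v : dotp (grad f x) v = 'd f x v.
Proof.
rewrite /dotp /grad [in RHS](row_sum_delta v) linear_sum.
by apply: eq_bigr => i _; rewrite mxE linearZ mulrC.
Qed.

Lemma lin_affine (f : 'rV[R]_n -> R) x y :
  lin f x y = dotp (grad f y) x + lin f 0 y.
Proof. by rewrite /lin sub0r dotpDr dotpNr addrCA addrA. Qed.

End Dotp.

Section ConvexGradient.
Variables (R : realType) (n : nat) (f : 'rV[R]_n -> R).
Hypothesis f_convex : convex_fun f.

Lemma convex_derive_le a v : derivable f a v -> 'D_v f a <= f (a + v) - f a.
Proof.
(* For 0 < t <= 1, convexity bounds the difference quotient at t by the one
   at t = 1. *)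
move=> /cvg_dnbhs_at_right Dcvg; apply: (cvgr_to_le Dcvg); near=> t.
have t0 : 0 < t by near: t; exact: nbhs_right_gt.
have t1 : t <= 1 by near: t; apply: nbhs_right_le; exact: ltr01.
have := @f_convex (a + v) a t; rewrite (ltW t0) t1 => /(_ isT).
have -> : t *: (a + v) + (1 - t) *: a = t *: v + a.
  by rewrite scalerDr scalerBl scale1r addrC addrA subrK addrC.
rewrite -[t^-1 *: _]/(t^-1 * _) ler_pdivrMl //= => ?; lra.
Unshelve. all: by end_near. Qed.

Lemma convex_lin_le x y : differentiable f y -> lin f x y <= f x.
Proof.
move=> df; rewrite /lin dotp_grad -deriveE //.
have := @convex_derive_le y (x - y) (diff_derivable df); rewrite subrKC; lra.
Qed.

End ConvexGradient.

Section AggregatedLinearization.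
Variables (R : realType) (n : nat) (f : 'rV[R]_n -> R).
Variables (y0 : 'rV[R]_n) (xs : nat -> 'rV[R]_n) (zeta : nat -> R).

Fixpoint agg_lin (j : nat) (x : 'rV[R]_n) : R :=
  match j with
  | 0 => lin f x y0
  | j'.+1 => (1 - zeta j') * agg_lin j' x + zeta j' * lin f x (xs j')
  end.

Lemma agg_lin_affine j x :
  agg_lin j x = dotp (agg_grad f y0 xs zeta j) x + agg_lin j 0.
Proof.
elim: j => [|j IH] /=; first exact: lin_affine.
by rewrite IH (lin_affine f x (xs j)) dotpDl !dotpZl; ring.
Qed.

Lemma agg_lin_le j x :
  (forall z, differentiable f z) -> convex_fun f ->
  (forall i, (i < j)%N -> 0 <= zeta i <= 1) -> agg_lin j x <= f x.
Proof.
move=> fd fc; elim: j => [|j IH] zeta01 /=; first exact: convex_lin_le.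
have /andP[z0 z1] := zeta01 j (ltnSn j).
have := IH (fun i ij => zeta01 i (leqW ij)).
have := convex_lin_le fc x (fd (xs j)); nra.
Qed.

End AggregatedLinearization.

Local Open Scope ereal_scope.

Lemma ge0_mule_neqNy (R : realType) (a : R) (e : \bar R) :
  (0 <= a)%R -> e != -oo -> a%:E * e != -oo.
Proof.
move=> a0; case: e => [r| |] // _; have [->|an0] := eqVneq a 0%R.
  by rewrite mul0e.
by rewrite gt0_muley // lte_fin lt0r an0.
Qed.

(* For H = +oo and z in {0, 1} this relies on the convention 0 * +oo = 0. *)
Lemma convex_comb_addeE (R : realType) (H : \bar R) (a b z : R) :
  H != -oo -> (0 <= z <= 1)%R ->
  (1 - z)%:E * (H + a%:E) + z%:E * (H + b%:E) = H + ((1 - z) * a + z * b)%:E.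
Proof.
case: H => [r| |] // _ /andP[z0 z1].
  by rewrite -!EFinD; congr (_%:E); ring.
rewrite !addye //; have [->|zn0] := eqVneq z 0%R.
  by rewrite subr0 mul0e adde0 mul1e.
rewrite (@gt0_muley _ z%:E) ?lte_fin ?lt0r ?zn0 // addey //.
by rewrite ge0_mule_neqNy // subr_ge0.
Qed.

Lemma ACP_agg_lin (R : realType) (n : nat) (f : 'rV[R]_n -> R)
    (h w : 'rV[R]_n -> \bar R) (alpha : R) (y0 : 'rV[R]_n) (xs : nat -> 'rV[R]_n)
    (zeta : nat -> R) j x :
  h_alpha h w alpha x != -oo -> (forall i, (i < j)%N -> (0 <= zeta i <= 1)%R) ->
  ACP f h w alpha y0 xs zeta j x
  = h_alpha h w alpha x + (agg_lin f y0 xs zeta j x)%:E.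
Proof.
move=> hNy; elim: j => [|j IH] zeta01 //=.
rewrite IH => [|i ij]; last exact/zeta01/leqW.
exact: convex_comb_addeE (zeta01 j (ltnSn j)).
Qed.

Section StrongConvexity.
Variables (R : realType) (n : nat) (N : 'rV[R]_n -> R).
Implicit Types (D : set 'rV[R]_n) (g : 'rV[R]_n -> \bar R) (mu : R).

Lemma strongly_convex_onT D mu g :
  (forall x, g x != -oo) -> (forall x, ~ D x -> g x = +oo) ->
  strongly_convex_on D N mu g -> strongly_convex_on [set: 'rV[R]_n] N mu g.
Proof.
move=> gNy gout gsc x y t _ _ t01; have /andP[t0 t1] := t01.
have [Dx|/gout gx] := pselect (D x); last first.
  rewrite gx gt0_muley ?lte_fin // !addye ?leey //.
  by rewrite ge0_mule_neqNy // subr_ge0 ltW.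
have [Dy|/gout gy] := pselect (D y); last first.
  rewrite gy gt0_muley ?lte_fin ?subr_gt0 // addey ?addye ?leey //.
  by rewrite ge0_mule_neqNy // ltW.
exact: gsc.
Qed.

Lemma strongly_convexD_affine D mu g (s : 'rV[R]_n) (c : R) :
  strongly_convex_on D N mu g ->
  strongly_convex_on D N mu (fun x => g x + (dotp s x + c)%:E).
Proof.
move=> gsc x y t Dx Dy t01; rewrite !muleDr ?fin_num_adde_defl // -!EFinM.
rewrite (addeACA (t%:E * g x)) (addeAC (t%:E * g x + _)) dotpDr !dotpZr.
apply: leeD; first exact: gsc.
by rewrite -EFinD lee_fin; lra.
Qed.

End StrongConvexity.

Section Conjugate.
Variables (R : realType) (n : nat).
Implicit Types (g : 'rV[R]_n -> \bar R) (s : 'rV[R]_n) (c : R).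

Lemma conj_le_affine_minorant g s c :
  (forall x, (dotp s x + c)%:E <= g x) -> conj g s <= (- c)%:E.
Proof.
move=> minor; apply: ge_ereal_sup => _ [x _ <-]; move: (minor x).
by case: (g x) => [r| |] //=; rewrite ?leNye // !lee_fin => ?; lra.
Qed.

Lemma conjN_le_inf g s c :
  conj g (- s) <= c%:E - ereal_inf (range (fun x => g x + (dotp s x + c)%:E)).
Proof.
apply: ge_ereal_sup => _ [x _ <-].
have : ereal_inf (range (fun x => g x + (dotp s x + c)%:E))
       <= g x + (dotp s x + c)%:E by apply: ereal_inf_lbound; exists x.
case: (g x) => [r| |] /= inf_le; last 2 first.
- by rewrite leNye.
- by move: inf_le; rewrite leeNy_eq => /eqP ->; rewrite leey.
apply: (@le_trans _ _ (c%:E - (r%:E + (dotp s x + c)%:E))).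
  by rewrite -EFinD -EFinN -EFinD lee_fin dotpNl; lra.
by apply: leeD2l; rewrite leeN2.
Qed.

End Conjugate.

Section RegularizedComposite.
Variables (R : realType) (n : nat) (N : 'rV[R]_n -> R).
Variables (h w : 'rV[R]_n -> \bar R) (alpha : R).
Hypotheses (h_neqNy : forall x, h x != -oo) (w_ge0 : forall x, 0 <= w x).
Hypothesis alpha_ge0 : (0 <= alpha)%R.

Lemma dom_fin_num x : dom h x -> h x \is a fin_num.
Proof. by rewrite fin_numE h_neqNy -ltey. Qed.

Lemma alpha_w_neqNy x : alpha%:E * w x != -oo.
Proof.
by apply: ge0_mule_neqNy => //; rewrite gt_eqF // (lt_le_trans (ltNyr 0)).
Qed.

Lemma h_alpha_neqNy x : h_alpha h w alpha x != -oo.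
Proof.
move: (h_neqNy x) (alpha_w_neqNy x); rewrite /h_alpha.
by case: (h x); case: (_ * _).
Qed.

Lemma h_alpha_out_dom x : ~ dom h x -> h_alpha h w alpha x = +oo.
Proof.
rewrite /dom /= ltey => /negP; rewrite negbK => /eqP hx.
by rewrite /h_alpha hx addye ?alpha_w_neqNy.
Qed.

Lemma h_alpha_strongly_convex_dom :
  convex_efun h -> (forall x, dom h x -> w x \is a fin_num) ->
  strongly_convex_on (dom h) N 1 w ->
  strongly_convex_on (dom h) N alpha (h_alpha h w alpha).
Proof.
move=> hc wfin wsc x y t hx hy t01.
have hz : dom h (t *: x + (1 - t) *: y)%R.
  apply: le_lt_trans (hc x y t t01) _.
  rewrite -(fineK (dom_fin_num hx)) -(fineK (dom_fin_num hy)).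
  by rewrite -!EFinM -EFinD ltry.
move: (hc x y t t01) (wsc x y t hx hy t01); rewrite /h_alpha.
rewrite -(fineK (dom_fin_num hx)) -(fineK (dom_fin_num hy)).
rewrite -(fineK (dom_fin_num hz)).
rewrite -(fineK (wfin _ hx)) -(fineK (wfin _ hy)) -(fineK (wfin _ hz)).
rewrite -!EFinM -!EFinD !lee_fin => hle wle.
have := ler_wpM2l alpha_ge0 wle; lra.
Qed.

End RegularizedComposite.

Local Close Scope ereal_scope.

Theorem lemma2p3 (R : realType) (n : nat) (N : 'rV[R]_n -> R)
  (f : 'rV[R]_n -> R) (h w : 'rV[R]_n -> \bar R) (L alpha : R)
  (y0 : 'rV[R]_n) (xs : nat -> 'rV[R]_n) (zeta : nat -> R) (k : nat) :
  is_norm N ->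
  (forall x, differentiable f x) -> convex_fun f -> 0 < L -> smooth_wrt N L f ->
  proper_fun h -> convex_efun h -> closed_fun h -> bounded_set_wrt N (dom h) ->
  (forall x, (0 <= w x)%E) -> closed_fun w ->
  strongly_convex_on (dom h) N 1 w ->
  (exists M : R, forall x, dom h x -> (w x <= M%:E)%E) ->
  0 < alpha ->
  dom h y0 ->
  (forall i, (i < k)%N -> dom h (xs i)) ->
  (forall i, (i < k)%N -> 0 <= zeta i <= 1) ->
  [/\ (forall x, dom h x ->
         (ACP f h w alpha y0 xs zeta k x <= phi_alpha f h w alpha x)%E),
      strongly_convex_on [set: 'rV[R]_n] N alpha (ACP f h w alpha y0 xs zeta k) &
      (forall u, dom h u ->
         (phi_alpha f h w alpha u + psi_alpha f h w alpha (agg_grad f y0 xs zeta k)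
          <= phi_alpha f h w alpha u
             - ereal_inf (range (ACP f h w alpha y0 xs zeta k)))%E)].
Proof.
move=> _ fd fc _ _ [hNy _] hc _ _ w0 _ wsc [M wM] alpha_gt0 _ _ zeta01.
have alpha_ge0 := ltW alpha_gt0.
have haNy := h_alpha_neqNy hNy w0 alpha_ge0.
have wfin x : dom h x -> w x \is a fin_num.
  by move=> /wM wx; rewrite ge0_fin_numE // (le_lt_trans wx) ?ltry.
set s := agg_grad f y0 xs zeta k; set c := agg_lin f y0 xs zeta k 0.
have ACPE : ACP f h w alpha y0 xs zeta k =
    (fun x => h_alpha h w alpha x + (dotp s x + c)%:E)%E.
  by apply/funext => x; rewrite ACP_agg_lin // agg_lin_affine.
split.
- move=> x _; rewrite ACP_agg_lin // /phi_alpha [(f x)%:E + _]addeC.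
  by apply: leeD2l; rewrite lee_fin agg_lin_le.
- rewrite ACPE; apply/strongly_convexD_affine/(strongly_convex_onT haNy).
    exact: h_alpha_out_dom.
  exact: h_alpha_strongly_convex_dom.
- move=> u _; apply: leeD2l; rewrite /psi_alpha ACPE.
  have conj_f_le : (conj (fun x => (f x)%:E) s <= (- c)%:E)%E.
    apply: conj_le_affine_minorant => x.
    by rewrite lee_fin -agg_lin_affine agg_lin_le.
  apply: le_trans (leeD (conjN_le_inf _ s c) conj_f_le) _.
  by rewrite addeAC -EFinD subrr add0e.
Qed.
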